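(* Let $C=\{C_n,\partial_n\}_{n\geq 0}$ be a chain complex of abelian groups (with $\partial_0=0$ and $C_{-1}=0$), and let $D=\{D_n\}_{n\ge 0}$ and $D'=\{D'_n\}_{n\ge 0}$ be graded subgroups of $C$ with $D'_n\subseteq D_n\subseteq C_n$ for all $n$. Then the inclusion $\mathrm{Inf}(D,C)\hookrightarrow \mathrm{Sup}(D,C)$ induces a chain map $$\iota:\ \mathrm{Inf}(D,C)/\mathrm{Inf}(D',C)\longrightarrow \mathrm{Sup}(D,C)/\mathrm{Sup}(D',C),$$ and $\iota$ induces an isomorphism $\iota_*: H_*\big(\mathrm{Inf}(D,C)/\mathrm{Inf}(D',C)\big)\xrightarrow{\cong} H_*\big(\mathrm{Sup}(D,C)/\mathrm{Sup}(D',C)\big)$ in every degree.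
   Context: For a chain complex $C$ and a graded subgroup $D$ of $C$ (with $D_{-1}=0$), the infimum chain complex $\mathrm{Inf}(D,C)$ is given by $\mathrm{Inf}_n(D,C)=D_n\cap \partial_n^{-1}(D_{n-1})$ (the largest sub-chain complex of $C$ contained in $D$), and the supremum chain complex $\mathrm{Sup}(D,C)$ is given by $\mathrm{Sup}_n(D,C)=D_n+\partial_{n+1}(D_{n+1})$ (the smallest sub-chain complex of $C$ containing $D$). If $D'\subseteq D$, then $\mathrm{Inf}(D',C)\subseteq\mathrm{Inf}(D,C)\subseteq \mathrm{Sup}(D,C)$ and $\mathrm{Inf}(D',C)\subseteq\mathrm{Sup}(D',C)\subseteq\mathrm{Sup}(D,C)$ are sub-chain complexes. *)

(* Chain complexes of abelian groups are modelled as a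
   family of zmodTypes C n (n >= 0) with additive boundaries
   d n : C (n+1) -> C n (so d_0 : C_0 -> C_{-1} = 0 is implicit). *)
From HB Require Import structures.
From mathcomp Require Import all_boot all_algebra.
Unset Printing Implicit Defensive.
Import GRing.Theory.
Local Open Scope ring_scope.

Section ChainDefs.
Variable C : nat -> zmodType.
Variable d : forall n, {additive C n.+1 -> C n}.

Definition graded := forall n, C n -> Prop.

Definition is_subgroup (G : zmodType) (S : G -> Prop) : Prop :=
  S 0 /\ forall x y, S x -> S y -> S (x - y).

Definition graded_subgroup (D : graded) : Prop := forall n, is_subgroup (C n) (D n).

Definition graded_incl (A B : graded) : Prop := forall n x, A n x -> B n x.

Definition is_subcomplex (A : graded) : Prop :=
  graded_subgroup A /\ forall n x, A n.+1 x -> A n (d n x).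

(* Inf_n(D,C) = D_n ∩ ∂_n^{-1}(D_{n-1}),  with D_{-1} = 0 and ∂_0 = 0 *)
Definition Inf (D : graded) : graded := fun n =>
  match n as k return C k -> Prop with
  | 0 => fun x => D 0 x
  | m.+1 => fun x => D m.+1 x /\ D m (d m x)
  end.

Definition Sup (D : graded) : graded := fun n x =>
  exists y z, D n y /\ D n.+1 z /\ x = y + d n z.

(* For sub-chain complexes B ⊆ A of C, the quotient complex A/B.
   Cycles of A/B in degree n, lifted to A_n: x ∈ A_n with ∂x ∈ B_{n-1}. *)
Definition rel_cycle (A B : graded) : graded := fun n =>
  match n as k return C k -> Prop with
  | 0 => fun x => A 0 x
  | m.+1 => fun x => A m.+1 x /\ B m (d m x)
  end.

(* Boundaries of A/B in degree n, lifted to A_n: ∂(A_{n+1}) + B_n. *)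
Definition rel_boundary (A B : graded) : graded := fun n x =>
  exists y z, A n.+1 y /\ B n z /\ x = d n y + z.

(* H_n(A/B) = rel_cycle A B n / rel_boundary A B n.
   The chain map A/B -> A'/B' induced by the inclusions A ⊆ A', B ⊆ B'
   (identity on representatives) induces a well-defined group
   isomorphism H_n(A/B) -> H_n(A'/B') in degree n.  Spelled out on
   representatives: it maps cycles to cycles and boundaries to
   boundaries (well-defined homomorphism), its kernel is trivial
   (injective) and every class is hit (surjective). *)
Definition induces_homology_iso_at (A B A' B' : graded) (n : nat) : Prop :=
  [/\ forall x : C n, rel_cycle A B n x -> rel_cycle A' B' n x,
      forall x : C n, rel_boundary A B n x -> rel_boundary A' B' n x,
      forall x : C n, rel_cycle A B n x -> rel_boundary A' B' n x ->
                rel_boundary A B n x &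
      forall y : C n, rel_cycle A' B' n y ->
        exists x, rel_cycle A B n x /\ rel_boundary A' B' n (y - x)].

End ChainDefs.

From HB Require Import structures.
From mathcomp Require Import all_boot all_algebra.
Import GRing.Theory.
Local Open Scope ring_scope.

Section Subgroup.
Variables (G : zmodType) (S : G -> Prop).
Hypothesis hS : is_subgroup G S.

Lemma subgroup0 : S 0. Proof. by case: hS. Qed.

Lemma subgroupB x y : S x -> S y -> S (x - y).
Proof. by case: hS => _; apply. Qed.

Lemma subgroupN x : S x -> S (- x).
Proof. by move=> Sx; rewrite -sub0r; apply: subgroupB => //; apply: subgroup0. Qed.

Lemma subgroupD x y : S x -> S y -> S (x + y).
Proof. by move=> Sx Sy; rewrite -[y]opprK; apply: subgroupB => //; apply: subgroupN. Qed.

End Subgroup.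

Arguments subgroup0 {G S}.
Arguments subgroupB {G S}.
Arguments subgroupD {G S}.

Section ChainComplex.
Variable C : nat -> zmodType.
Variable d : forall n, {additive C n.+1 -> C n}.
Hypothesis dd0 : forall n (x : C n.+2), d n (d n.+1 x) = 0.

Section InfSup.
Variable E : graded C.
Hypothesis hE : graded_subgroup C E.

Lemma Inf_incl : graded_incl C (Inf C d E) E.
Proof. by move=> [|m] x //= []. Qed.

(* E is contained in Sup(E), writing x = x + ∂0. *)
Lemma Sup_incl : graded_incl C E (Sup C d E).
Proof.
move=> n x Ex; exists x, 0; rewrite raddf0 addr0.
by do 2!split=> //; apply: subgroup0.
Qed.

Lemma Inf_incl_Sup : graded_incl C (Inf C d E) (Sup C d E).
Proof. by move=> n x /Inf_incl; apply: Sup_incl. Qed.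

(* A boundary lying in E lies in Inf(E), since its own boundary is 0. *)
Lemma Inf_boundary m (x : C m.+1) : E m (d m x) -> Inf C d E m (d m x).
Proof. by case: m x => [|m] x //= Edx; rewrite dd0; split=> //; apply: subgroup0. Qed.

(* Inf(E) is a sub-chain complex: closure under ∂ uses ∂∂ = 0. *)
Lemma Inf_subcomplex : is_subcomplex C d (Inf C d E).
Proof.
split=> [[|m]|n x /= [_ Edx]]; last exact: Inf_boundary.
  split; [exact: subgroup0 | by move=> x y; apply: subgroupB].
split=> [|x y /= [Ex Edx] [Ey Edy]] /=.
  by rewrite raddf0; split; apply: subgroup0.
by rewrite raddfB; split; apply: subgroupB.
Qed.

(* Sup(E) is a sub-chain complex: ∂(y + ∂z) = ∂y with y ∈ E. *)
Lemma Sup_subcomplex : is_subcomplex C d (Sup C d E).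
Proof.
split=> [n|n x [y [z [Ey [Ez ->]]]]].
  split; first exact: Sup_incl (subgroup0 (hE n)).
  move=> _ _ [x1 [x2 [Ex1 [Ex2 ->]]]] [y1 [y2 [Ey1 [Ey2 ->]]]].
  exists (x1 - y1), (x2 - y2); rewrite raddfB opprD addrACA.
  by split; [|split]; try apply: subgroupB.
exists 0, y; rewrite raddfD dd0 addr0 add0r.
by split; [apply: subgroup0 | split].
Qed.

End InfSup.

Arguments Sup_incl {E} hE {n x}.

Lemma Inf_monotone (E E' : graded C) :
  graded_incl C E' E -> graded_incl C (Inf C d E') (Inf C d E).
Proof. by move=> sE'E [|m] x /=; [apply: sE'E | case; split; apply: sE'E]. Qed.

Lemma Sup_monotone (E E' : graded C) :
  graded_incl C E' E -> graded_incl C (Sup C d E') (Sup C d E).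
Proof.
by move=> sE'E n x [y [z [E'y [E'z ->]]]]; exists y, z; split; [|split]; try apply: sE'E.
Qed.

Lemma rel_cycle_monotone (A B A' B' : graded C) :
  graded_incl C A A' -> graded_incl C B B' ->
  graded_incl C (rel_cycle C d A B) (rel_cycle C d A' B').
Proof. by move=> sA sB [|m] x /=; [apply: sA | case=> Ax Bdx; split; auto]. Qed.

Lemma rel_boundary_monotone (A B A' B' : graded C) :
  graded_incl C A A' -> graded_incl C B B' ->
  graded_incl C (rel_boundary C d A B) (rel_boundary C d A' B').
Proof. by move=> sA sB n x [y [z [Ay [Bz ->]]]]; exists y, z; split; auto. Qed.

Section InfToSup.
Variables D D' : graded C.
Hypotheses (hD : graded_subgroup C D) (hD' : graded_subgroup C D').
Hypothesis hD'D : graded_incl C D' D.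

Lemma rel_boundary_SupE n (x : C n) :
  rel_boundary C d (Sup C d D) (Sup C d D') n x <->
  exists w z, D n.+1 w /\ D' n z /\ x = d n w + z.
Proof.
split=> [[_ [_ [[y1 [y2 [Dy1 [Dy2 ->]]]] [[z1 [z2 [D'z1 [D'z2 ->]]]] ->]]]]|].
  exists (y1 + z2), z1; split; first by apply: subgroupD => //; apply: hD'D.
  by split=> //; rewrite !raddfD dd0 addr0 [z1 + _]addrC addrA.
move=> [w [z [Dw [D'z ->]]]]; exists w, z.
by split; [exact: (Sup_incl hD Dw) | split; first exact: (Sup_incl hD' D'z)].
Qed.

Lemma rel_cycle_Inf_succE m (x : C m.+1) :
  rel_cycle C d (Inf C d D) (Inf C d D') m.+1 x <-> D m.+1 x /\ D' m (d m x).
Proof.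
split=> [[[Dx _] /Inf_incl D'dx] // | [Dx D'dx]].
by split; [split=> //; apply: hD'D | apply: Inf_boundary].
Qed.

Lemma Inf_to_Sup_injective n (x : C n) :
  rel_cycle C d (Inf C d D) (Inf C d D') n x ->
  rel_boundary C d (Sup C d D) (Sup C d D') n x ->
  rel_boundary C d (Inf C d D) (Inf C d D') n x.
Proof.
move=> cx /rel_boundary_SupE [w [z [Dw [D'z ex]]]].
have Dx : D n x by case: n x w z cx Dw D'z ex => [|m] x // w z /rel_cycle_Inf_succE [].
have Ddw : D n (d n w).
  by rewrite -(addrK z (d n w)) -ex; apply: subgroupB => //; apply: hD'D.
exists w, z; split; first by split.
split=> //; clear Dw Dx Ddw.
case: n x w z cx D'z ex => [|m] x w z // /rel_cycle_Inf_succE [_ D'dx] D'z ex.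
by split=> //; move: D'dx; rewrite ex raddfD dd0 add0r.
Qed.

Lemma Inf_to_Sup_surjective n (y : C n) :
  rel_cycle C d (Sup C d D) (Sup C d D') n y ->
  exists x, rel_cycle C d (Inf C d D) (Inf C d D') n x /\
            rel_boundary C d (Sup C d D) (Sup C d D') n (y - x).
Proof.
case: n y => [|m] y.
  move=> [y1 [y2 [Dy1 [Dy2 ->]]]]; exists y1; split=> //.
  apply/rel_boundary_SupE; exists y2, 0; rewrite addr0 addrC addKr.
  by split=> //; split=> //; apply: subgroup0.
move=> [[y1 [y2 [Dy1 [Dy2 ->]]]]].
rewrite raddfD dd0 addr0 => -[w1 [w2 [D'w1 [D'w2 edy1]]]].
have edx : d m (y1 - w2) = w1 by rewrite raddfB edy1 addrK.
exists (y1 - w2); split.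
  apply/rel_cycle_Inf_succE; rewrite edx.
  by split=> //; apply: subgroupB => //; apply: hD'D.
apply/rel_boundary_SupE; exists y2, w2; split=> //; split=> //.
by rewrite opprB addrC addrA subrK addrC.
Qed.

End InfToSup.

End ChainComplex.

Theorem lemma1p1 (C : nat -> zmodType) (d : forall n, {additive C n.+1 -> C n})
  (dd0 : forall n (x : C n.+2), d n (d n.+1 x) = 0)
  (D D' : graded C)
  (hD : graded_subgroup C D) (hD' : graded_subgroup C D')
  (hD'D : graded_incl C D' D) :
  [/\ is_subcomplex C d (Inf C d D), is_subcomplex C d (Inf C d D'),
      is_subcomplex C d (Sup C d D), is_subcomplex C d (Sup C d D') &
    [/\ graded_incl C (Inf C d D') (Inf C d D), graded_incl C (Inf C d D) (Sup C d D),
        graded_incl C (Inf C d D') (Sup C d D'), graded_incl C (Sup C d D') (Sup C d D) &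
    forall n, induces_homology_iso_at C d (Inf C d D) (Inf C d D') (Sup C d D) (Sup C d D') n]].
Proof.
split; [exact: Inf_subcomplex | exact: Inf_subcomplex
       | exact: Sup_subcomplex | exact: Sup_subcomplex | split].
- exact: Inf_monotone.
- exact: Inf_incl_Sup.
- exact: Inf_incl_Sup.
- exact: Sup_monotone.
move=> n; split.
- by apply: rel_cycle_monotone; apply: Inf_incl_Sup.
- by apply: rel_boundary_monotone; apply: Inf_incl_Sup.
- exact: Inf_to_Sup_injective.
- exact: Inf_to_Sup_surjective.
Qed.
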